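(* Fix $\theta\in(0,1)$. For positive integers $m,n$, let $\bm{D}_0\in\mathbb{R}^{m\times m}$ have i.i.d. $\mathcal{N}(0,1/m)$ entries, let $\bm{X}_0\in\mathbb{R}^{m\times n}$ have i.i.d. $BG(\theta)$ entries, and let $\Omega$ be the support of $\bm{X}_0$ and $\Omega_i\subseteq[n]$ the support of its $i$-th row, $\Omega_i^c=[n]\setminus\Omega_i$. Consider the conditions: (C1) $n\ge m+\frac{|\Omega|}{m}-1$; (C2) for all $i\in[m]$, $|\Omega_i^c|\ge m-1$; (C3) for all $i\in[m]$ and all $i'\ne i$ in $[m]$, there exists $j\in[n]$ with $(\bm{X}_0)_{i,j}=0$ and $(\bm{X}_0)_{i',j}\ne0$. Let $m,n\to\infty$ with $n/m\to\bar{n}\in(0,\infty)$. If $\bar{n}>\frac{1}{1-\theta}$, then the probability that all three conditions (C1), (C2), (C3) hold tends to $1$.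
   Context: $[n]=\{1,\dots,n\}$. A random variable $X$ is Bernoulli–Gaussian, $X\sim BG(\theta)$, if $X=W\cdot C$ with $W$ and $C$ independent, $W$ Bernoulli with $\Pr(W=1)=\theta$, and $C\sim\mathcal{N}(0,1)$. The support of a matrix or row vector is the set of indices of its nonzero entries. *)

From HB Require Import structures.
From mathcomp Require Import all_boot all_order all_algebra.
From mathcomp Require Import all_classical all_reals all_analysis.
Set Implicit Arguments. Unset Strict Implicit. Unset Printing Implicit Defensive.
Import Order.TTheory GRing.Theory Num.Theory.
Import numFieldNormedType.Exports.
Local Open Scope classical_set_scope.
Local Open Scope ring_scope.

(* Mutual independence of a finite family of real random variables:
   the product rule for all families of Borel sets (one per variable;
   taking B i = setT recovers every subfamily). *)
Definition mutually_independent {d} {T : measurableType d} {R : realType}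
  (P : probability T R) (I : finType) (Y : I -> T -> R) : Prop :=
  (forall i, measurable_fun setT (Y i)) /\
  forall B : I -> set R, (forall i, measurable (B i)) ->
    P (\bigcap_(i in [set: I]) (Y i @^-1` B i)) =
    (\prod_(i : I) P (Y i @^-1` B i))%E.

Definition bernoulli_rv {d} {T : measurableType d} {R : realType}
  (P : probability T R) (theta : R) (W : T -> R) : Prop :=
  (forall w, W w = 0 \/ W w = 1) /\ P [set w | W w = 1] = theta%:E.

Definition std_normal_rv {d} {T : measurableType d} {R : realType}
  (P : probability T R) (C : T -> R) : Prop :=
  forall A : set R, measurable A -> P (C @^-1` A) = normal_prob 0 1 A.

Definition iid_BG_matrix {d} {T : measurableType d} {R : realType}
  (P : probability T R) (theta : R) (m n : nat)
  (X : 'I_m -> 'I_n -> T -> R) : Prop :=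
  exists (W C : 'I_m -> 'I_n -> T -> R),
    [/\ forall i j w, X i j w = W i j w * C i j w,
        forall i j, bernoulli_rv P theta (W i j),
        forall i j, std_normal_rv P (C i j) &
        mutually_independent P
          (fun k : ('I_m * 'I_n) + ('I_m * 'I_n) =>
             match k with inl ij => W ij.1 ij.2 | inr ij => C ij.1 ij.2 end)].

Definition row_supp {R : realType} {m n : nat} (M : 'I_m -> 'I_n -> R)
  (i : 'I_m) : {set 'I_n} := [set j | M i j != 0].

Definition supp_card {R : realType} {m n : nat} (M : 'I_m -> 'I_n -> R) : nat :=
  \sum_(i < m) #|row_supp M i|.

Definition cond1 {R : realType} {m n : nat} (M : 'I_m -> 'I_n -> R) : Prop :=
  (m%:R + (supp_card M)%:R / m%:R - 1 <= n%:R :> R).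

Definition cond2 {R : realType} {m n : nat} (M : 'I_m -> 'I_n -> R) : Prop :=
  forall i : 'I_m, (m - 1 <= #|~: row_supp M i|)%N.

Definition cond3 {R : realType} {m n : nat} (M : 'I_m -> 'I_n -> R) : Prop :=
  forall i i' : 'I_m, i != i' -> exists j : 'I_n, M i j = 0 /\ M i' j != 0.

From HB Require Import structures.
From mathcomp Require Import all_boot all_order all_algebra.
From mathcomp Require Import all_classical all_reals all_analysis.
From mathcomp Require Import measurable_realfun ring lra zify.
Set Implicit Arguments.
Unset Strict Implicit.
Unset Printing Implicit Defensive.
Import Order.TTheory GRing.Theory Num.Theory.
Import numFieldNormedType.Exports.
Local Open Scope ring_scope.

(* The three conditions only depend on the support of X_0.  Since a Gaussian
   vanishes with probability 0, that support is almost surely the pattern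
   {W = 1}, an i.i.d. Bernoulli(theta) boolean matrix; and (C2) implies (C1).
   Row i violates (C2) when fewer than m - 1 of its n entries vanish; an
   exponential moment (Chernoff) bound gives probability at most
   t^m (theta + (1 - theta)/t)^n for every t >= 1.  Rows i <> i' violate (C3)
   when no column is zero in row i and nonzero in row i', which has
   probability (1 - theta (1 - theta))^n by independence of the columns.
   Once n >= c m with (1 - theta) c > 1, a union bound over these m + m^2
   events leaves a failure probability O(m^2 e^{-kappa m}) = O(1/m). *)

Lemma markov_sum (R : realDomainType) (G : finType) (w h : G -> R) (A : pred G) :
  (forall g, 0 <= w g) -> (forall g, 0 <= h g) -> (forall g, A g -> 1 <= h g) ->
  \sum_(g | A g) w g <= \sum_g w g * h g.
Proof.
move=> w0 h0 Ah; rewrite big_mkcond; apply: ler_sum => g _.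
case: ifP => [/Ah h1|_]; last exact: mulr_ge0.
by rewrite -[leLHS]mulr1 ler_wpM2l.
Qed.

Lemma union_bound_sum (R : realDomainType) (G K : finType) (w : G -> R)
    (A : pred G) (B : K -> pred G) :
  (forall g, 0 <= w g) -> (forall g, A g -> exists k, B k g) ->
  \sum_(g | A g) w g <= \sum_k \sum_(g | B k g) w g.
Proof.
move=> w0 AB.
apply: le_trans (markov_sum (h := fun g => \sum_k (B k g)%:R) w0 _ _) _.
- by move=> g; apply: sumr_ge0 => k _; exact: ler0n.
- move=> g /AB[k Bkg]; rewrite (bigD1 k) //= Bkg lerDl.
  by apply: sumr_ge0 => *; exact: ler0n.
under eq_bigr do rewrite mulr_sumr; rewrite exchange_big /=.
apply/ler_sum => k _; under eq_bigr do rewrite mulr_natr mulrb.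
by rewrite -big_mkcond.
Qed.

Lemma prod_supp2 (R : comPzSemiRingType) (K : finType) (k0 k1 : K) (f : K -> R) :
  k0 != k1 -> (forall k, k != k0 -> k != k1 -> f k = 1) ->
  \prod_k f k = f k0 * f k1.
Proof.
move=> k01 f1; rewrite (bigD1 k0) //= (bigD1 k1) /=; last by rewrite eq_sym k01.
by rewrite big1 ?mulr1 ?mulrA // => k /andP[]; exact: f1.
Qed.

Lemma natr_forall (R : comPzSemiRingType) (K : finType) (b : pred K) :
  ([forall k, b k]%:R : R) = \prod_k (b k)%:R.
Proof.
have [/forallP bT|/forallPn[k /negbTE bk]] := boolP [forall k, b k].
  by rewrite big1 // => k _; rewrite bT.
by rewrite (bigD1 k) //= bk mul0r.
Qed.

Section bernoulli_patterns.
Variables (R : realFieldType) (theta : R).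
Hypothesis theta01 : 0 <= theta <= 1.

Definition bern (b : bool) : R := if b then theta else 1 - theta.

Lemma bern_ge0 b : 0 <= bern b.
Proof. by case/andP: theta01; case: b => /= ? ?; rewrite ?subr_ge0. Qed.

Lemma sum_bern_prod (K : finType) (phi : K -> bool -> R) :
  \sum_(g : {ffun K -> bool}) (\prod_k bern (g k)) * \prod_k phi k (g k) =
  \prod_k (theta * phi k true + (1 - theta) * phi k false).
Proof.
rewrite (eq_bigr (fun g : {ffun K -> bool} => \prod_k (bern (g k) * phi k (g k))));
  last by move=> g _; rewrite big_split.
transitivity (\prod_k \sum_b bern b * phi k b); first by rewrite bigA_distr_bigA.
by apply: eq_bigr => k _; rewrite big_bool.
Qed.

Lemma sum_bern_weight (K : finType) :
  \sum_(g : {ffun K -> bool}) \prod_k bern (g k) = 1.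
Proof.
transitivity (\prod_(k : K) \sum_b bern b); first by rewrite bigA_distr_bigA.
by rewrite big1 // => k _; rewrite big_bool /= addrC subrK.
Qed.

Variables I J : finType.

(* A boolean I x J matrix stored column by column ([F j i] is entry (i, j)),
   so that its law is a product over the independent columns. *)
Local Notation pattern := {ffun J -> {ffun I -> bool}}.

Definition pattern_weight (F : pattern) : R := \prod_j \prod_i bern (F j i).

Lemma pattern_weight_ge0 F : 0 <= pattern_weight F.
Proof. by do 2![apply: prodr_ge0 => ? _]; exact: bern_ge0. Qed.

Lemma sum_pattern_weight_prod (psi : J -> {ffun I -> bool} -> R) :
  \sum_F pattern_weight F * \prod_j psi j (F j) =
  \prod_j \sum_(g : {ffun I -> bool}) (\prod_i bern (g i)) * psi j g.
Proof. by rewrite bigA_distr_bigA; apply: eq_bigr => F _; rewrite big_split. Qed.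

Lemma sum_pattern_weight : \sum_F pattern_weight F = 1.
Proof.
transitivity (\prod_(j : J) \sum_(g : {ffun I -> bool}) \prod_i bern (g i)).
  by rewrite bigA_distr_bigA.
by rewrite big1 // => j _; exact: sum_bern_weight.
Qed.

Definition row_zeros (F : pattern) (i : I) : nat := #|[set j | ~~ F j i]|.

Definition no_separating_column (F : pattern) (i i' : I) : bool :=
  [forall j, F j i || ~~ F j i'].

Definition good_pattern (k : nat) (F : pattern) : bool :=
  [forall i, k <= row_zeros F i]%N &&
  [forall i, forall i', (i != i') ==> ~~ no_separating_column F i i'].

Lemma sum_few_row_zeros (t : R) (i : I) (k : nat) : 1 <= t ->
  \sum_(F | (row_zeros F i < k)%N) pattern_weight F <=
  t ^+ k * (theta + (1 - theta) / t) ^+ #|J|.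
Proof.
move=> t1; have t0 : 0 < t by rewrite (lt_le_trans ltr01).
pose phi (i' : I) (b : bool) := if i' == i then (if ~~ b then t^-1 else 1) else 1.
have col_phi (F : pattern) j :
    \prod_i' phi i' (F j i') = if ~~ F j i then t^-1 else 1.
  by rewrite /phi -big_mkcond big_pred1_eq.
apply: (le_trans (markov_sum (A := fun F => (row_zeros F i < k)%N) (w := pattern_weight)
  (h := fun F => t ^+ k * \prod_j \prod_i' phi i' (F j i')) pattern_weight_ge0 _ _)).
- move=> F; apply: mulr_ge0; first by rewrite exprn_ge0 ?ltW.
  by apply: prodr_ge0 => j _; rewrite col_phi; case: ifP; rewrite ?invr_ge0 ltW.
- move=> F Fk; rewrite (eq_bigr _ (fun j _ => col_phi F j)) -big_mkcond /=.
  rewrite (eq_bigl (fun j => j \in [set j | ~~ F j i])) => [|j]; last by rewrite inE.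
  by rewrite prodr_const exprVn -expfB ?exprn_ege1.
under eq_bigr do rewrite mulrCA.
rewrite -mulr_sumr; apply: ler_wpM2l; first by rewrite exprn_ge0 ?ltW.
rewrite (sum_pattern_weight_prod (fun _ g => \prod_i' phi i' (g i'))).
rewrite (eq_bigr (fun _ => theta + (1 - theta) / t)) => [|j _].
  by rewrite prodr_const.
rewrite (sum_bern_prod phi) /phi (bigD1 i) //= eqxx big1 ?mulr1 // => i' /negbTE ->.
by rewrite !mulr1 addrC subrK.
Qed.

Lemma sum_no_separating_column (i i' : I) : i != i' ->
  \sum_(F | no_separating_column F i i') pattern_weight F =
  (1 - theta * (1 - theta)) ^+ #|J|.
Proof.
move=> ii'; rewrite big_mkcond /=.
transitivity (\sum_F pattern_weight F * \prod_j (F j i || ~~ F j i')%:R).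
  apply: eq_bigr => F _; rewrite -natr_forall /no_separating_column.
  by case: [forall j, _]; rewrite ?mulr1 ?mulr0.
rewrite (sum_pattern_weight_prod (fun _ g => (g i || ~~ g i')%:R)).
rewrite (eq_bigr (fun _ => 1 - theta * (1 - theta))) => [|j _].
  by rewrite prodr_const.
pose phi (k : I) (b : bool) : R :=
  if k == i then (~~ b)%:R else if k == i' then b%:R else 1.
have phi1 k b : k != i -> k != i' -> phi k b = 1.
  by rewrite /phi => /negbTE -> /negbTE ->.
have phi_i' b : phi i' b = b%:R by rewrite /phi eq_sym (negbTE ii') eqxx.
have sepE (g : {ffun I -> bool}) :
    (g i || ~~ g i')%:R = 1 - \prod_k phi k (g k) :> R.
  rewrite (prod_supp2 ii') => [|k]; last exact: phi1.
  rewrite phi_i' /phi eqxx.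
  by case: (g i); case: (g i'); rewrite /= ?mul0r ?mul1r ?subr0 ?subrr.
under eq_bigr do rewrite sepE mulrBr mulr1.
rewrite sumrB sum_bern_weight (sum_bern_prod phi) (prod_supp2 ii') => [|k ki ki'].
  by rewrite !phi_i' /phi eqxx /=; ring.
by rewrite !phi1 // !mulr1 addrC subrK.
Qed.

Lemma sum_not_good_pattern_le (t : R) (k : nat) : 1 <= t ->
  \sum_(F | ~~ good_pattern k F) pattern_weight F <=
  #|I|%:R * (t ^+ k * (theta + (1 - theta) / t) ^+ #|J|) +
  (#|I| ^ 2)%:R * (1 - theta * (1 - theta)) ^+ #|J|.
Proof.
move=> t1.
pose bad (a : I + I * I) (F : pattern) := match a with
  | inl i => (row_zeros F i < k)%N
  | inr p => (p.1 != p.2) && no_separating_column F p.1 p.2 end.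
apply: le_trans (union_bound_sum (B := bad) pattern_weight_ge0 _) _.
  move=> F; rewrite negb_and => /orP[/forallPn[i]|/forallPn[i /forallPn[i']]].
    by rewrite -ltnNge; exists (inl i).
  by rewrite negb_imply negbK; exists (inr (i, i')).
rewrite big_sumType /=; apply: lerD.
  rewrite mulr_natl -sumr_const; apply: ler_sum => i _.
  exact: sum_few_row_zeros.
rewrite mulr_natl -mulnn -card_prod -sumr_const; apply: ler_sum => -[i i'] _ /=.
have [-> | ii'] := eqVneq i i'; last by rewrite sum_no_separating_column.
rewrite big_pred0 // exprn_ge0 //; case/andP: theta01 => *; nra.
Qed.

Lemma sum_good_pattern_ge (t : R) (k : nat) : 1 <= t ->
  1 - (#|I|%:R * (t ^+ k * (theta + (1 - theta) / t) ^+ #|J|) +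
       (#|I| ^ 2)%:R * (1 - theta * (1 - theta)) ^+ #|J|) <=
  \sum_(F | good_pattern k F) pattern_weight F.
Proof.
move=> t1; have := sum_pattern_weight; rewrite (bigID (good_pattern k)) /=.
move=> /(canRL (addrK _)) ->; rewrite lerD2l lerN2.
exact: sum_not_good_pattern_le.
Qed.

End bernoulli_patterns.

Definition entry_pattern (R : Type) (m n : nat) (p : pred R) (M : 'I_m -> 'I_n -> R) :
  {ffun 'I_n -> {ffun 'I_m -> bool}} := [ffun j => [ffun i => p (M i j)]].

Notation support_pattern := (entry_pattern (predC1 0)).

Definition cond123 (R : realType) (m n : nat) (M : 'I_m -> 'I_n -> R) : Prop :=
  cond1 M /\ cond2 M /\ cond3 M.

Section support_conditions.
Context (R : realType) (m n : nat).
Implicit Types M : 'I_m -> 'I_n -> R.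

Lemma cond1_of_cond2 M : cond2 M -> cond1 M.
Proof.
move=> c2; rewrite /cond1; have [m0|m0] := posnP m.
  have -> : (m%:R : R) = 0 by rewrite m0.
  rewrite invr0 mulr0 !add0r; have := ler0n R n; lra.
have row_supp_le i : (#|row_supp M i| <= n - (m - 1))%N.
  by have := c2 i; have := cardsC (row_supp M i); rewrite card_ord; lia.
have mn : (m - 1 <= n)%N.
  have := c2 (Ordinal m0); have := cardsC (row_supp M (Ordinal m0)).
  by rewrite card_ord; lia.
have supp_le : (supp_card M <= m * (n - (m - 1)))%N.
  rewrite -[m in (m * _)%N]card_ord -sum_nat_const.
  by apply: leq_sum => i _; exact: row_supp_le.
have mR : 0 < (m%:R : R) by rewrite ltr0n.
rewrite -(ler_nat R) natrM natrB // natrB // in supp_le.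
have : (supp_card M)%:R / m%:R <= n%:R - (m%:R - 1%:R) :> R.
  by rewrite ler_pdivrMr // mulrC.
lra.
Qed.

Lemma cond123_of_good_support M : good_pattern (m - 1) (support_pattern M) -> cond123 M.
Proof.
case/andP => /forallP zeros /forallP sep.
have c2 : cond2 M.
  move=> i; apply: leq_trans (zeros i) _; rewrite /row_zeros.
  by apply/subset_leq_card/fintype.subsetP => j; rewrite !inE !ffunE.
split; first exact: cond1_of_cond2.
split=> // i i' ii'; have /forallP/(_ i')/implyP/(_ ii') := sep i.
case/forallPn => j; rewrite !ffunE /= negb_or => /andP[/negPn/eqP Mij /negPn Mi'j].
by exists j.
Qed.

Lemma cond123_support M M' :
  support_pattern M = support_pattern M' -> cond123 M -> cond123 M'.
Proof.
move=> sMM'.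
have nz i j : (M i j != 0) = (M' i j != 0).
  by move/ffunP/(_ j)/ffunP/(_ i): sMM'; rewrite !ffunE.
have rs i : row_supp M i = row_supp M' i by apply/setP => j; rewrite !inE nz.
have sc : supp_card M = supp_card M' by apply: eq_bigr => i _; rewrite rs.
move=> [h1 [h2 h3]]; split; first by rewrite /cond1 -sc.
split; first by move=> i; rewrite -rs.
move=> i i' ii'; have [j [Mij Mi'j]] := h3 i i' ii'; exists j; split; last by rewrite -nz.
by apply/eqP; rewrite -[_ == _]negbK -nz Mij eqxx.
Qed.

End support_conditions.

Local Open Scope classical_set_scope.

Section finite_valued_random_variable.
Context d (T : measurableType d) (R : realType) (P : probability T R).
Variables (G : finType) (xi : T -> G).
Hypothesis measurable_fiber : forall g, measurable [set w | xi w = g].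

Let preimage_fin (A : set G) :
  [set w | A (xi w)] = \bigcup_(g in A) [set w | xi w = g].
Proof. by apply/seteqP; split => [w Aw|w [g Ag /= ->]] //; exists (xi w). Qed.

Lemma measurable_fin_preimage (A : set G) : measurable [set w | A (xi w)].
Proof.
by rewrite preimage_fin; apply: fin_bigcup_measurable => //; exact: finite_finset.
Qed.

Lemma probability_fin_preimage (A : pred G) :
  P [set w | A (xi w)] = (\sum_(g | A g) P [set w | xi w = g])%E.
Proof.
rewrite (preimage_fin A) measure_fin_bigcup //; last 2 first.
- exact: finite_finset.
- by move=> g h _ _ [w [/= <- <-]].
rewrite -(bigfs _ (index_enum_uniq G)) // => g _.
by rewrite mem_index_enum.
Qed.

End finite_valued_random_variable.

Lemma negligible_fin_bigcup d (T : measurableType d) (R : realType)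
    (mu : {measure set T -> \bar R}) (K : finType) (N : K -> set T) :
  (forall k, mu.-negligible (N k)) -> mu.-negligible (\bigcup_k N k).
Proof.
move=> N0; rewrite -bigsetU_fset_set; last exact: finite_finset.
by elim/big_ind: _ => //; [exact: negligible_set0 | exact: negligibleU].
Qed.

Lemma le_measure_negligible d (T : measurableType d) (R : realType)
    (mu : {measure set T -> \bar R}) (S E N : set T) :
  measurable S -> measurable E -> mu.-negligible N -> S `\` N `<=` E ->
  (mu S <= mu E)%E.
Proof.
move=> mS mE [N' [mN' N'0 NN']] SE.
apply: (@le_trans _ _ (mu (E `|` N'))).
  rewrite le_measure ?inE //; first exact: measurableU.
  move=> w Sw; have [N'w|N'w] := pselect (N' w); first by right.
  by left; apply: SE; split => // /NN'.
apply: le_trans (measureU2 _ mE mN') _.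
by move: N'0 => /= ->; rewrite adde0.
Qed.

Lemma measurable_pred_eq d (T : measurableType d) (p : pred T) (b : bool) :
  measurable [set x | p x] -> measurable [set x | p x = b].
Proof.
case: b => // mp; rewrite (_ : [set x | _] = ~` [set x | p x]); first exact: measurableC.
by apply/seteqP; split => x /=; [move=> -> | move/negP/negbTE].
Qed.

Section entry_pattern_fibers.
Context d (T : measurableType d) (R : realType) (m n : nat).
Variables (Z : 'I_m -> 'I_n -> T -> R) (p : pred R).
Hypothesis mZ : forall i j, measurable_fun setT (Z i j).
Hypothesis mp : measurable [set x | p x].

Lemma entry_pattern_fiberE F :
  [set w | entry_pattern p (fun i j => Z i j w) = F] =
  \bigcap_(k in [set: 'I_m * 'I_n]) (Z k.1 k.2 @^-1` [set x | p x = F k.2 k.1]).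
Proof.
apply/seteqP; split => [w <- [i j] _|w ZF]; first by rewrite /= !ffunE.
by apply/ffunP => j; apply/ffunP => i; rewrite !ffunE; exact: (ZF (i, j)).
Qed.

Lemma measurable_entry_pattern_fiber F :
  measurable [set w | entry_pattern p (fun i j => Z i j w) = F].
Proof.
rewrite entry_pattern_fiberE; apply: fin_bigcap_measurable; first exact: finite_finset.
move=> [i j] _; rewrite -[_ @^-1` _]setTI; apply: mZ => //.
exact: measurable_pred_eq.
Qed.

End entry_pattern_fibers.

Section iid_BG_matrix.
Context d (T : measurableType d) (R : realType) (P : probability T R).
Variables (theta : R) (m n : nat) (W C X : 'I_m -> 'I_n -> T -> R).
Hypothesis XE : forall i j w, X i j w = W i j w * C i j w.
Hypothesis W01 : forall i j, bernoulli_rv P theta (W i j).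
Hypothesis C_normal : forall i j, std_normal_rv P (C i j).
Hypothesis WC_indep : mutually_independent P
  (fun k : ('I_m * 'I_n) + ('I_m * 'I_n) =>
     match k with inl ij => W ij.1 ij.2 | inr ij => C ij.1 ij.2 end).

Let measurable_W i j : measurable_fun setT (W i j).
Proof. exact: (WC_indep.1 (inl (i, j))). Qed.

Let measurable_C i j : measurable_fun setT (C i j).
Proof. exact: (WC_indep.1 (inr (i, j))). Qed.

Let measurable_eq1 : measurable [set x : R | x == 1].
Proof. by rewrite (_ : [set x | _] = [set 1]) //; apply/seteqP; split => x /eqP. Qed.

Lemma probability_W_eq1 i j b :
  P (W i j @^-1` [set x | (x == 1) = b]) = (bern theta b)%:E.
Proof.
have W1 : W i j @^-1` [set x | (x == 1) = true] = [set w | W i j w = 1].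
  by apply/seteqP; split => w /eqP.
case: b; first by rewrite W1 (W01 i j).2.
rewrite (_ : _ @^-1` _ = ~` (W i j @^-1` [set x | (x == 1) = true])).
  rewrite probability_setC ?W1 ?(W01 i j).2 // -W1 -[_ @^-1` _]setTI.
  exact: measurable_W.
by apply/seteqP; split => w /=; [move=> -> | move/negP/negbTE].
Qed.

Lemma probability_W_pattern F :
  P [set w | entry_pattern (pred1 1) (fun i j => W i j w) = F] =
  (pattern_weight theta F)%:E.
Proof.
pose B (k : ('I_m * 'I_n) + ('I_m * 'I_n)) : set R :=
  if k is inl ij then [set x | (x == 1) = F ij.2 ij.1] else setT.
rewrite entry_pattern_fiberE (_ : \bigcap_(k in _) _ = \bigcap_(k in setT)
   ((match k with inl ij => W ij.1 ij.2 | inr ij => C ij.1 ij.2 end) @^-1` B k)).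
  rewrite WC_indep.2 => [|[ij|ij]]; last 2 first.
  - exact: measurable_pred_eq.
  - exact: measurableT.
  rewrite big_sumType /= [X in (_ * X)%E]big1 ?mule1 => [|ij _]; last first.
    by rewrite preimage_setT probability_setT.
  under eq_bigr do rewrite probability_W_eq1.
  rewrite prodEFin -(pair_bigA _ (fun i j => bern theta (F j i))) /=.
  by rewrite exchange_big.
apply/seteqP; split => w wF.
- by move=> [ij|ij] _ //=; exact: (wF ij).
- by move=> ij _; exact: (wF (inl ij)).
Qed.

Lemma negligible_C_zero : P.-negligible [set w | exists i j, C i j w = 0].
Proof.
rewrite (_ : [set w | _] = \bigcup_(k : 'I_m * 'I_n) (C k.1 k.2 @^-1` [set 0])).
  apply: negligible_fin_bigcup => -[i j]; apply/negligibleP.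
    by rewrite -[_ @^-1` _]setTI; exact: measurable_C.
  have := C_normal i j (measurable_set1 0); move=> /= ->.
  by apply: (null_content_dominatesP _ _).1 (@normal_prob_dominates R 0 1) _ _
    (lebesgue_measure_set1 0).
apply/seteqP; split => [w [i [j Cij]]|w [[i j] _ Cij]]; first by exists (i, j).
by exists i, j.
Qed.

Lemma support_eq_W_pattern w : ~ (exists i j, C i j w = 0) ->
  support_pattern (fun i j => X i j w) =
  entry_pattern (pred1 1) (fun i j => W i j w).
Proof.
move=> C0; apply/ffunP => j; apply/ffunP => i; rewrite !ffunE /= XE mulf_eq0 negb_or.
have -> : C i j w != 0 by apply/eqP => Cij; apply: C0; exists i, j.
rewrite andbT; case: ((W01 i j).1 w) => ->; first by rewrite eqxx eq_sym oner_eq0.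
by rewrite oner_neq0 eqxx.
Qed.

Lemma measurable_cond123 : measurable [set w | cond123 (fun i j => X i j w)].
Proof.
have mX i j : measurable_fun setT (X i j).
  rewrite (_ : X i j = W i j \* C i j); first exact: measurable_funM.
  by apply/funext => w; exact: XE.
pose xi w := support_pattern (fun i j => X i j w).
have mxi F : measurable [set w | xi w = F].
  apply: measurable_entry_pattern_fiber => //.
  rewrite (_ : [set x | _] = ~` [set 0]); first exact: measurableC.
  by apply/seteqP; split => x /eqP.
rewrite (_ : [set w | _] = [set w | cond123 (fun i j => (xi w j i)%:R : R)]).
  exact: (measurable_fin_preimage mxi (fun F => cond123 (fun i j => (F j i)%:R : R))).
have supportE (M : 'I_m -> 'I_n -> R) :
    support_pattern (fun i j => ((support_pattern M) j i)%:R : R) =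
    support_pattern M.
  by apply/ffunP => j; apply/ffunP => i; rewrite !ffunE /= pnatr_eq0; case: (M i j != 0).
by apply/seteqP; split => w /= h; apply: (cond123_support _ h); rewrite supportE.
Qed.

Lemma probability_cond123_ge :
  ((\sum_(F : {ffun 'I_n -> {ffun 'I_m -> bool}} | good_pattern (m - 1) F)
      pattern_weight theta F)%:E <=
   P [set w | cond123 (fun i j => X i j w)])%E.
Proof.
have mxi F : measurable [set w | entry_pattern (pred1 1) (fun i j => W i j w) = F].
  exact: measurable_entry_pattern_fiber.
rewrite -sumEFin; under eq_bigr do rewrite -probability_W_pattern.
rewrite -(probability_fin_preimage P mxi).
apply: (le_measure_negligible _ _ negligible_C_zero).
- exact: (measurable_fin_preimage mxi (fun F => good_pattern (m - 1) F)).
- exact: measurable_cond123.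
- move=> w [/= good C0]; apply: cond123_of_good_support.
  by rewrite support_eq_W_pattern.
Qed.

End iid_BG_matrix.

Section exponential_bounds.
Variable R : realType.

Lemma exprn_le_expR (y : R) k : -1 <= y -> (1 + y) ^+ k <= expR (k%:R * y).
Proof.
move=> y1; rewrite expRM_natl; apply: lerXn2r; rewrite ?nnegrE ?expR_ge0 ?expR_ge1Dx //.
by rewrite -lerBlDl sub0r.
Qed.

Lemma sqrn_expRN_le (k : R) (M : nat) : 0 < k -> (0 < M)%N ->
  M%:R ^+ 2 * expR (- (k * M%:R)) <= 27 / (k ^+ 3 * M%:R).
Proof.
move=> k0 M0; have Mp : 0 < (M%:R : R) by rewrite ltr0n.
set x := k * M%:R; have x0 : 0 < x by rewrite mulr_gt0.
have cube_le : x ^+ 3 / 27 <= expR x.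
  have -> : expR x = expR (x / 3) ^+ 3 by rewrite -expRM_natl; congr expR; field.
  rewrite (_ : x ^+ 3 / 27 = (x / 3) ^+ 3); last by field.
  apply: lerXn2r; rewrite ?nnegrE ?expR_ge0 ?divr_ge0 ?ltW //.
  by have := expR_ge1Dx (x / 3); lra.
rewrite expRN ler_pdivlMr ?mulr_gt0 ?exprn_gt0 //.
rewrite (_ : M%:R ^+ 2 / expR x * (k ^+ 3 * M%:R) = x ^+ 3 / expR x); last first.
  by rewrite /x; field; rewrite gt_eqF ?expR_gt0.
by rewrite ler_pdivrMr ?expR_gt0 // mulrC -ler_pdivrMr //.
Qed.

End exponential_bounds.

Section tail_bounds.
Variables (R : realType) (theta c : R) (m n : nat).
Hypotheses (theta01 : 0 <= theta <= 1) (cmn : c * m%:R <= n%:R).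

Lemma expR_decreasing_tail (y : R) : -1 <= y <= 0 ->
  (1 + y) ^+ n <= expR (c * m%:R * y).
Proof.
case/andP=> y1 y0; apply: le_trans (exprn_le_expR _ y1) _.
by rewrite ler_expR ler_wnM2r.
Qed.

Lemma row_zeros_tail_expR (t : R) : 1 <= t -> (1 - theta) * c = 2 * t - 1 ->
  t ^+ m * (theta + (1 - theta) / t) ^+ n <= expR (- ((t - 1) ^+ 2 / t * m%:R)).
Proof.
case/andP: theta01 => th0 th1 t1 ct; have t0 : 0 < t by rewrite (lt_le_trans ltr01).
have tV1 : t^-1 <= 1 by rewrite invf_le1.
have tV0 : 0 <= t^-1 by rewrite invr_ge0 ltW.
have tm : t ^+ m <= expR (m%:R * (t - 1)).
  by have := exprn_le_expR (y := t - 1) m; rewrite subrKC; apply; lra.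
have qn : (theta + (1 - theta) / t) ^+ n <=
    expR (c * m%:R * - ((1 - theta) * (1 - t^-1))).
  rewrite (_ : theta + _ = 1 + - ((1 - theta) * (1 - t^-1))); last by ring.
  by apply: expR_decreasing_tail; apply/andP; split; nra.
have -> : - ((t - 1) ^+ 2 / t * m%:R) =
    m%:R * (t - 1) + c * m%:R * - ((1 - theta) * (1 - t^-1)).
  rewrite (_ : c * m%:R * _ = - (m%:R * ((1 - theta) * c) * (1 - t^-1))); last by ring.
  by rewrite ct; field; exact: lt0r_neq0.
rewrite expRD; apply: ler_pM => //; apply: exprn_ge0; first exact: ltW.
by apply: addr_ge0 => //; rewrite mulr_ge0 // subr_ge0.
Qed.

Lemma twin_rows_tail_expR :
  (1 - theta * (1 - theta)) ^+ n <= expR (- (c * theta * (1 - theta) * m%:R)).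
Proof.
case/andP: theta01 => th0 th1.
rewrite (_ : - (c * theta * (1 - theta) * m%:R) = c * m%:R * - (theta * (1 - theta)));
  last by ring.
by apply: expR_decreasing_tail; apply/andP; split; nra.
Qed.

End tail_bounds.

Lemma good_pattern_weight_ge (R : realType) (theta c : R) :
  0 < theta < 1 -> 1 < (1 - theta) * c ->
  exists A : R, forall m n : nat, (0 < m)%N -> c * m%:R <= n%:R ->
    1 - A / m%:R <=
    \sum_(F : {ffun 'I_n -> {ffun 'I_m -> bool}} | good_pattern (m - 1) F)
      pattern_weight theta F.
Proof.
case/andP => th0 th1 c1; have th01 : 0 <= theta <= 1 by rewrite !ltW.
have c0 : 0 < c by nra.
pose t := (1 + (1 - theta) * c) / 2; have t1 : 1 < t by rewrite /t; lra.
pose kappa := Num.min ((t - 1) ^+ 2 / t) (c * theta * (1 - theta)).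
have kappa0 : 0 < kappa.
  by rewrite lt_min !mulr_gt0 ?divr_gt0 ?exprn_gt0 ?subr_gt0 ?invr_gt0 //; lra.
exists (54 / kappa ^+ 3) => m n m0 cmn.
have mR1 : 1 <= (m%:R : R) by rewrite ler1n.
apply: le_trans (sum_good_pattern_ge th01 _ _ (m - 1) (ltW t1)).
rewrite !card_ord lerD2l lerN2.
set E := expR (- (kappa * m%:R)).
have rowE : t ^+ (m - 1) * (theta + (1 - theta) / t) ^+ n <= E.
  apply: (@le_trans _ _ (t ^+ m * (theta + (1 - theta) / t) ^+ n)).
    apply: ler_wpM2r; last by rewrite ler_weXn2l ?leq_subr // ltW.
    by rewrite exprn_ge0 // addr_ge0 ?divr_ge0 //; lra.
  apply: le_trans (row_zeros_tail_expR th01 cmn (ltW t1) _) _; first by rewrite /t; field.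
  by rewrite ler_expR lerN2 ler_wpM2r // ge_min lexx.
have twinE : (1 - theta * (1 - theta)) ^+ n <= E.
  apply: le_trans (twin_rows_tail_expR th01 cmn) _.
  by rewrite ler_expR lerN2 ler_wpM2r // ge_min lexx orbT.
have mE : m%:R * (t ^+ (m - 1) * (theta + (1 - theta) / t) ^+ n) <= m%:R ^+ 2 * E.
  apply: le_trans (ler_wpM2l (ler0n _ m) rowE) _.
  by rewrite expr2 -mulrA ler_peMl // mulr_ge0 ?expR_ge0.
have m2E : (m ^ 2)%:R * (1 - theta * (1 - theta)) ^+ n <= m%:R ^+ 2 * E.
  by rewrite natrX ler_wpM2l ?exprn_ge0.
have := sqrn_expRN_le kappa0 m0.
rewrite (_ : 54 / kappa ^+ 3 / m%:R = 2 * (27 / (kappa ^+ 3 * m%:R))); last first.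
  by field; rewrite !gt_eqF // ltr0n.
rewrite -/E; lra.
Qed.

Theorem corollary1 (R : realType) (theta nbar : R)
  (htheta : 0 < theta < 1) (hnbar : 0 < nbar)
  (m n : nat -> nat) (hm : forall k, (0 < m k)%N) (hn : forall k, (0 < n k)%N)
  (hmoo : forall N : nat, exists K : nat, forall k, (K <= k)%N -> (N <= m k)%N)
  (hnoo : forall N : nat, exists K : nat, forall k, (K <= k)%N -> (N <= n k)%N)
  (hratio : (fun k => (n k)%:R / (m k)%:R : R) @ \oo --> nbar)
  (d : nat -> measure_display) (T : forall k, measurableType (d k))
  (P : forall k, probability (T k) R)
  (X : forall k, 'I_(m k) -> 'I_(n k) -> T k -> R)
  (hX : forall k, iid_BG_matrix (P k) theta (X k))
  (hbig : 1 / (1 - theta) < nbar) :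
  (fun k => P k [set w | cond1 (fun i j => X k i j w) /\
                         cond2 (fun i j => X k i j w) /\
                         cond3 (fun i j => X k i j w)]) @ \oo --> 1%E.
Proof.
have /andP[th0 th1] := htheta; have b0 : 0 < 1 - theta by rewrite subr_gt0.
pose c := ((1 - theta)^-1 + nbar) / 2.
have c1 : 1 < (1 - theta) * c.
  have -> : (1 - theta) * c = 1 + (1 - theta) * (c - (1 - theta)^-1).
    by field; exact: lt0r_neq0.
  by rewrite ltrDl mulr_gt0 // subr_gt0 /c; move: hbig; rewrite div1r; lra.
have cnbar : c < nbar by rewrite /c; move: hbig; rewrite div1r; lra.
have [A goodA] := good_pattern_weight_ge htheta c1.
have cmn : \forall k \near \oo, c * (m k)%:R <= (n k)%:R.
  apply: filterS (cvgr_gt _ hratio _ cnbar) => k.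
  by rewrite ltr_pdivlMr ?ltr0n // => /ltW.
have m_oo : (fun k => ((m k)%:R : R)) @ \oo --> +oo.
  by apply/cvgrnyP/cvgnyPge => N; have [K mK] := hmoo N; exists K.
apply: (squeeze_cvge (f := fun k => (1 - A / (m k)%:R)%:E) (h := fun=> 1%E)).
- near=> k; have [W [C [XE W01 Cnormal indep]]] := hX k.
  apply/andP; split; last exact: probability_le1 (measurable_cond123 XE indep).
  apply: le_trans (probability_cond123_ge XE W01 Cnormal indep); rewrite lee_fin.
  apply: (goodA _ _ (hm k)); near: k; exact: cmn.
- apply: cvg_EFin; first exact: nearW.
  rewrite -[X in _ --> X]subr0; apply: cvgB; first exact: cvg_cst.
  rewrite -(mulr0 A); apply: cvgM; first exact: cvg_cst.
  by apply/gtr0_cvgV0 => //; apply: nearW => k; rewrite ltr0n.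
- exact: cvg_cst.
Unshelve. all: end_near.
Qed.
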